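(* For every sufficiently small $\eta>0$ there exists $\nu_0>0$ such that for every $\nu\in(0,\nu_0]$ there exists $\beta_0>0$ such that for every $\beta\in(0,\beta_0]$ there exists $\alpha_0>0$ such that for every $\alpha\in(0,\alpha_0]$ there exists $n_0$ such that for all $n\ge n_0$ the following holds. Let $\hat G$ be an $(\alpha,\eta,\nu)$-superextremal biclique on $n$ vertices with partition $V(\hat G)=A\uplus B$, let $M$ be a matching in $\hat G[B]$ with $|E(M)|\le\alpha n$, and set $Z=E(M)$. Suppose that $\hat G[A]$ has no edges, the edge set of $\hat G[B]$ is exactly $E(M)$, and for every edge $ab\in E(\hat G)$ with $a\in A,b\in B$ we have $\max\{d_{\hat G}(a,B),d_{\hat G}(b,A)\}\ge(1/2-\eta)n$. Then for every directed Hamilton cycle $\vec H$ of $\hat G$ and every edge $e\in E(H)\setminus Z$, there are at least $\beta n^2$ pairs $(e',i)$ with $e'\in E(\hat G)\setminus E(H)$ and $i\in\{1,2\}$ such that the switching $s_i(\vec H;e,e')$ is admissible (with respect to $\hat G$).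
   Context: $d_G(v,X)$ is the number of neighbours of $v$ in $X$. A graph $G$ on $n$ vertices is an $(\alpha,\varepsilon,\nu)$-superextremal biclique if there is a partition $V(G)=A\uplus B$ with: (B1) $0\le |B|-|A|\le\alpha n$; (B2) $d(a,B)\ge(1/2-\varepsilon)n$ for all but at most $\alpha n$ vertices $a\in A$; (B3) $d(a,B)\ge\nu n$ for all $a\in A$; (B4) $d(b,A)\ge(1/2-\varepsilon)n$ for all but at most $\alpha n$ vertices $b\in B$; (B5) $d(b,A)\ge(1/4-\varepsilon)n$ for all $b\in B$; (B6) if $|A|\ne\lfloor n/2\rfloor$, then $d(b,B)\le 2\nu n$ for all $b\in B$. A directed Hamilton cycle $\vec H$ is a Hamilton cycle $H$ with a cyclic orientation; its successor function $\pi$ sends $x$ to the head of the arc leaving $x$. For $e=x\pi(x)\in E(H)$ and $e'=x'y'\notin E(H)$ with endpoints labelled so that $x$ lies on the directed path of $\vec H$ from $y'$ to $x'$, let $H_1=(H-\{e,x'\pi(x'),\pi^{-1}(y')y'\})+\{e',x\pi(x'),\pi^{-1}(y')\pi(x)\}$ and $H_2=(H-\{e,x'\pi(x'),\pi^{-1}(y')y'\})+\{e',x\pi^{-1}(y'),\pi(x)\pi(x')\}$; $s_i(\vec H;e,e')$ is $H_i$ oriented to contain the arc $(x',y')$. It is admissible (with respect to a graph $G$) if $H_i\subseteq G$. *)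

From Stdlib Require Import Reals.
From mathcomp Require Import all_boot fingroup perm.
Local Open Scope R_scope.

Set Implicit Arguments.
Unset Strict Implicit.
Unset Printing Implicit Defensive.

Definition Rltb_ (x y : R) : bool := if Rlt_dec x y then true else false.

Section Defs.
Variable T : finType.

Definition simple_graph (adj : rel T) : Prop :=
  (forall u v, adj u v = adj v u) /\ (forall u, ~~ adj u u).

Definition deg_in (adj : rel T) (v : T) (X : {set T}) : nat :=
  #|[set u in X | adj v u]|.

Definition edge_set (adj : rel T) : {set {set T}} :=
  [set e : {set T} | [exists u : T, exists v : T, adj u v && (e == [set u; v])]].

Definition card_low (adj : rel T) (X Y : {set T}) (t : R) : nat :=
  #|[set v in X | Rltb_ (INR (deg_in adj v Y)) t]|.

Definition superextremal (adj : rel T) (A B : {set T}) (alpha eps nu : R) : Prop :=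
  let n := INR #|T| in
  (A :&: B = set0 /\ A :|: B = setT) /\
  [/\
      ((#|A| <= #|B|)%N /\ (INR #|B| - INR #|A| <= alpha * n)),
      (INR (card_low adj A B ((1/2 - eps) * n)) <= alpha * n),
      (forall a, a \in A -> (nu * n <= INR (deg_in adj a B))) &
   [/\
      (INR (card_low adj B A ((1/2 - eps) * n)) <= alpha * n),
      (forall b, b \in B -> ((1/4 - eps) * n <= INR (deg_in adj b A))) &
      (#|A| <> #|T| ./2 -> forall b, b \in B -> (INR (deg_in adj b B) <= 2 * nu * n))]].

Definition matching_in (adj : rel T) (X : {set T}) (Z : {set {set T}}) : Prop :=
  (forall e, e \in Z -> exists u v, [/\ u \in X, v \in X, adj u v & e = [set u; v]]) /\
  (forall e f, e \in Z -> f \in Z -> e <> f -> [disjoint e & f]).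

(* A directed Hamilton cycle of G, given by its successor function pi:
   a cyclic permutation of all vertices with every arc x -> pi x an edge of G. *)
Definition dir_ham_cycle (adj : rel T) (pi : {perm T}) : Prop :=
  (3 <= #|T|)%N /\ (forall x, adj x (pi x)) /\ (forall x y, fconnect pi x y).

Definition ham_edges (pi : {perm T}) : {set {set T}} :=
  [set [set x; pi x] | x : T].

(* The edge sets of H_1 (i = false) and H_2 (i = true) for
   e = x pi(x) and e' = x'y' (labelled as in the definition). *)
Definition switch_edges (pi : {perm T}) (i : bool) (x x' y' : T) : {set {set T}} :=
  let pim := (pi^-1)%g y' in
  (ham_edges pi :\: [set [set x; pi x]; [set x'; pi x']; [set pim; y']])
  :|: (if i
       then [set [set x'; y']; [set x; pim]; [set pi x; pi x']]
       else [set [set x'; y']; [set x; pi x']; [set pim; pi x]]).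

(* The pairs (e', i) with e' in E(G) \ E(H) such that s_i(H; e, e') is
   admissible, where e = x pi(x).  The labelling (x', y') of e' must satisfy
   "x lies on the directed path of H from y' to x'". *)
Definition admissible_pairs (adj : rel T) (pi : {perm T}) (x : T)
  : {set {set T} * bool} :=
  [set p : {set T} * bool |
     (p.1 \in edge_set adj :\: ham_edges pi) &&
     [exists x' : T, exists y' : T,
        [&& p.1 == [set x'; y'],
            (findex pi y' x <= findex pi y' x')%N &
            (switch_edges pi p.2 x x' y' \subset edge_set adj)]]].

End Defs.

From Stdlib Require Import Reals Lra Lia.
From mathcomp Require Import all_boot fingroup perm zify.

Set Implicit Arguments.
Unset Strict Implicit.
Unset Printing Implicit Defensive.

(* Let e = x pi(x). A pair (s, t) with x ~ s, pi(x) ~ t, pinv(s) ~ pi(t) and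
   pinv(t) ~ pi(s) yields an admissible switching: its new edge is pinv(s) pi(t)
   or pinv(t) pi(s), whichever labelling puts x on the required arc, and it
   trades the cycle edges at x, s and t for x s, pi(x) t and the new edge.
   As e is not in Z and A is independent, one endpoint c of e lies in A. Its
   B-neighbours outside V(Z) and away from the few low-degree vertices of A
   give nu n / 2 choices for one member of the pair: their cycle neighbours are
   high-degree vertices of A, which miss at most (eta + alpha/2) n vertices of
   B. Hence at least n / 5 of the (1/4 - eta) n A-neighbours of the other
   endpoint of e complete the pair, and distinct pairs give distinct
   switchings, so there are at least nu n^2 / 10 of them. *)

Lemma set2_separated (T : finType) (X : {set T}) a b c d :
  a \in X -> b \notin X -> c \in X -> d \notin X ->
  [set a; b] = [set c; d] -> a = c /\ b = d.
Proof.
move=> aX bX cX dX E.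
have := set21 a b; have := set22 a b; rewrite E !inE.
case/orP=> /eqP bE; first by rewrite bE cX in bX.
case/orP=> /eqP aE; last by rewrite -aE aX in dX.
by [].
Qed.

Lemma card_dep_pairs_ge (T : finType) (S : {set T}) (F : T -> {set T}) k m :
  (forall s, s \in S -> k <= m * #|F s|) ->
  #|S| * k <= m * #|[set st : T * T | (st.1 \in S) && (st.2 \in F st.1)]|.
Proof.
move=> kF.
have -> : #|[set st : T * T | (st.1 \in S) && (st.2 \in F st.1)]| = \sum_(s in S) #|F s|.
  rewrite -sum1_card (eq_bigl (fun st => (st.1 \in S) && (st.2 \in F st.1))); last first.
    by move=> st; rewrite inE.
  rewrite -(pair_big_dep (mem S) (fun s => mem (F s)) (fun _ _ => 1)) /=.
  by apply: eq_bigr => s _; rewrite sum1_card.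
by rewrite big_distrr -sum_nat_const; apply: leq_sum.
Qed.

Lemma card_dep_pairs_swap_ge (T : finType) (S : {set T}) (F : T -> {set T}) k m :
  (forall s, s \in S -> k <= m * #|F s|) ->
  #|S| * k <= m * #|[set st : T * T | (st.2 \in S) && (st.1 \in F st.2)]|.
Proof.
move=> /card_dep_pairs_ge le_k; apply: (leq_trans le_k); rewrite leq_mul2l.
apply/orP; right; rewrite -(card_imset _ (can_inj (@swap_pairK T T))).
by apply: subset_leq_card; apply/subsetP=> _ /imsetP [[s t] + ->]; rewrite !inE.
Qed.

Lemma leq_card_setD (T : finType) (A B : {set T}) : #|A| <= #|A :\: B| + #|B|.
Proof. by rewrite -(cardsID B A) addnC leq_add2l subset_leq_card ?subsetIr. Qed.

Lemma setC_partition (T : finType) (A B : {set T}) :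
  A :&: B = set0 -> A :|: B = setT -> B = ~: A.
Proof.
move=> AB_disj AB_cover; apply/setP=> v; rewrite inE.
case vA: (v \in A).
  by apply/negP=> vB; have := in_set0 v; rewrite -AB_disj inE vA vB.
by have := in_setT v; rewrite -AB_cover inE vA.
Qed.

Lemma card_set5_le (T : finType) (a b c d e : T) : #|[set a; b; c; d; e]| <= 5.
Proof.
apply: leq_trans (card_size [:: a; b; c; d; e]).
by apply: subset_leq_card; apply/subsetP=> z; rewrite !inE -!orbA.
Qed.

Lemma card_perm_imset (T : finType) (p : {perm T}) (A : {set T}) : #|p @: A| = #|A|.
Proof. exact/card_imset/perm_inj. Qed.

Lemma mem_perm_imset (T : finType) (p : {perm T}) (A : {set T}) v :
  (v \in p @: A) = ((p^-1)%g v \in A).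
Proof. by rewrite -{1}(permKV p v) mem_imset //; apply: perm_inj. Qed.

Section CyclicOrder.
Variables (T : finType) (pi : {perm T}).
Hypothesis pi_cyclic : forall x y, fconnect pi x y.

Lemma order_cyclic v : fingraph.order pi v = #|T|.
Proof.
apply/eqP; rewrite eqn_leq max_card /=.
by apply: subset_leq_card; apply/subsetP=> y _; rewrite inE pi_cyclic.
Qed.

Lemma findex_lt_card x v : findex pi x v < #|T|.
Proof. by rewrite -(order_cyclic x) findex_max. Qed.

Lemma findex_iter_cyclic x i : i < #|T| -> findex pi x (iter i pi x) = i.
Proof. by move=> ?; apply: findex_iter; rewrite order_cyclic. Qed.

Lemma iter_card x : iter #|T| pi x = x.
Proof. by rewrite -(order_cyclic x) iter_order //; apply: perm_inj. Qed.

Lemma findex_rebase x y z :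
  findex pi y z = if findex pi x y <= findex pi x z
                  then findex pi x z - findex pi x y
                  else #|T| - findex pi x y + findex pi x z.
Proof.
have := findex_lt_card x y; have := findex_lt_card x z.
have Ey := iter_findex (pi_cyclic x y); have Ez := iter_findex (pi_cyclic x z).
move: (findex pi x y) (findex pi x z) Ey Ez => a b Ey Ez hb ha.
case: leqP => hab.
- have -> : z = iter (b - a) pi y by rewrite -Ey -iterD subnK.
  rewrite findex_iter_cyclic //; lia.
- have -> : z = iter (#|T| - a + b) pi y.
    by rewrite -Ey -iterD addnAC subnK ?iterD ?iter_card //; lia.
  rewrite findex_iter_cyclic //; lia.
Qed.

Lemma findex_succ x v : findex pi x (pi v) =
  if findex pi x v + 1 < #|T| then findex pi x v + 1 else 0.
Proof.
have hv := findex_lt_card x v.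
have -> : pi v = iter (findex pi x v + 1) pi x.
  by rewrite addn1 iterS iter_findex.
case: ifP => h; first by rewrite findex_iter_cyclic.
have -> : findex pi x v + 1 = #|T| by lia.
by rewrite iter_card findex0.
Qed.

Lemma findex_pred x v : v != x -> findex pi x ((pi^-1)%g v) = findex pi x v - 1.
Proof.
move=> vx; have := findex_succ x ((pi^-1)%g v); rewrite permKV.
have := findex_eq0 pi x v; rewrite [x == v]eq_sym (negbTE vx).
case: ifP => _ /eqP; lia.
Qed.

Definition on_arc y v z := findex pi y v <= findex pi y z.

Lemma on_arc_switch x s t : s != x -> t != x ->
  ~~ on_arc (pi t) x ((pi^-1)%g s) -> on_arc (pi s) x ((pi^-1)%g t).
Proof.
move=> sx tx; rewrite /on_arc.
rewrite (findex_rebase x (pi t) x) (findex_rebase x (pi t) ((pi^-1)%g s)).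
rewrite (findex_rebase x (pi s) x) (findex_rebase x (pi s) ((pi^-1)%g t)).
rewrite !findex_succ !findex_pred // findex0.
have := findex_eq0 pi x s; have := findex_eq0 pi x t.
rewrite ![x == _]eq_sym (negbTE sx) (negbTE tx).
have := findex_lt_card x s; have := findex_lt_card x t.
move: (findex pi x s) (findex pi x t) => a b ha hb /eqP hb0 /eqP ha0.
repeat case: ifP; lia.
Qed.

End CyclicOrder.

Lemma mem_edge_set (T : finType) (adj : rel T) u v :
  adj u v -> [set u; v] \in edge_set adj.
Proof.
by move=> uv; rewrite inE; apply/existsP; exists u; apply/existsP; exists v; rewrite uv eqxx.
Qed.

Lemma ham_edge_consecutive (T : finType) (pi : {perm T}) u v :
  u != v -> [set u; v] \in ham_edges pi -> v = pi u \/ u = pi v.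
Proof.
move=> uv /imsetP [y _ E].
move: uv; have := set21 u v; have := set22 u v; rewrite E !inE.
by case/orP=> /eqP -> /orP [] /eqP ->; rewrite ?eqxx; auto.
Qed.

Section Switchings.
Variables (T : finType) (adj : rel T) (pi : {perm T}) (x : T).
Hypothesis adj_sym : forall u v, adj u v = adj v u.
Hypothesis adj_irr : forall u, ~~ adj u u.
Hypothesis pi_cyclic : forall y z, fconnect pi y z.
Hypothesis pi_adj : forall y, adj y (pi y).
Local Notation pinv := (pi^-1)%g.

Lemma switch_edges_sub (i : bool) x' y' :
  adj x' y' ->
  (if i then adj x (pinv y') && adj (pi x) (pi x')
   else adj x (pi x') && adj (pinv y') (pi x)) ->
  switch_edges pi i x x' y' \subset edge_set adj.
Proof.
move=> x'y' new_adj; apply/subsetP=> e; case/setUP.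
  by case/setDP=> /imsetP [y _ ->] _; apply/mem_edge_set/pi_adj.
by case: i new_adj => /andP [h1 h2] /setUP [/setUP [] | ] /set1P ->;
  apply: mem_edge_set.
Qed.

Definition cross_pair s t :=
  [&& adj (pinv s) (pi t), adj (pinv t) (pi s),
      [set pinv s; pi t] \notin ham_edges pi & [set pinv t; pi s] \notin ham_edges pi].

Lemma cross_pairC s t : cross_pair s t = cross_pair t s.
Proof. by rewrite /cross_pair andbCA [_ && (_ \notin _)]andbC. Qed.

Lemma ham_edge_pred_succ s t : pinv s != pi t ->
  [set pinv s; pi t] \in ham_edges pi -> t = pinv s \/ t = pinv (pinv (pinv s)).
Proof.
move=> st /(ham_edge_consecutive st) [/perm_inj | E]; first by left.
by right; rewrite E !permK.
Qed.

Lemma cross_pairP s t :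
  adj (pinv s) (pi t) -> adj (pinv t) (pi s) ->
  t \notin [set pinv s; pinv (pinv (pinv s)); pi s; pi (pi (pi s))] ->
  cross_pair s t.
Proof.
move=> st ts; rewrite !inE !negb_or -!andbA => /and4P [t1 t3 t1' t3'].
have adj_neq u v : adj u v -> u != v by apply: contraTneq => ->.
rewrite /cross_pair st ts /=; apply/andP; split.
  apply/negP=> ham_st.
  by case: (ham_edge_pred_succ (adj_neq _ _ st) ham_st) => E; rewrite E eqxx in t1 t3.
apply/negP=> ham_ts.
by case: (ham_edge_pred_succ (adj_neq _ _ ts) ham_ts) => E; rewrite E !permKV eqxx in t1' t3'.
Qed.

(* [(s, t)] stands for the switching that adds the edges [x s] and [pi x t];
   the side [X] containing [pinv s] and [pi s] but not [pinv t] and [pi t]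
   makes [switching_of] injective. *)
Definition switching_pair (X : {set T}) (st : T * T) :=
  let: (s, t) := st in
  [&& s != x, t != x, adj x s, adj (pi x) t,
      [&& pinv s \in X, pi s \in X, pi t \notin X & pinv t \notin X] & cross_pair s t].

(* When the labelling [(pinv s, pi t)] violates the arc condition,
   [on_arc_switch] shows that [(pinv t, pi s)] meets it, with [s_2] in place
   of [s_1]. *)
Definition switching_of (st : T * T) : {set T} * bool :=
  let: (s, t) := st in
  if on_arc pi (pi t) x (pinv s) then ([set pinv s; pi t], false)
  else ([set pinv t; pi s], true).

Lemma switching_of_admissible X st :
  switching_pair X st -> switching_of st \in admissible_pairs adj pi x.
Proof.
case: st => s t /and5P [sx tx xs xt /andP [_ /and4P [a1 a2 n1 n2]]].
rewrite /switching_of; case: ifP => arc; rewrite inE /= in_setD.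
- rewrite mem_edge_set // n1; apply/existsP; exists (pinv s); apply/existsP; exists (pi t).
  move: arc; rewrite eqxx /on_arc => -> /=; apply: switch_edges_sub => //=.
  by rewrite permKV permK xs adj_sym xt.
- rewrite mem_edge_set // n2; apply/existsP; exists (pinv t); apply/existsP; exists (pi s).
  move: (on_arc_switch pi_cyclic sx tx (negbT arc)); rewrite eqxx /on_arc => -> /=.
  by apply: switch_edges_sub => //=; rewrite permK permKV xs xt.
Qed.

Lemma switching_of_inj X : {in switching_pair X &, injective switching_of}.
Proof.
move=> [s t] [s' t'] /and5P [_ _ _ _ /andP [/and4P [h1 h2 h3 h4] _]]
                     /and5P [_ _ _ _ /andP [/and4P [h1' h2' h3' h4'] _]].
rewrite /switching_of; case: ifP => _; case: ifP => _ // [] E.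
  by have [/perm_inj -> /perm_inj ->] := set2_separated h1 h3 h1' h3' E.
rewrite setUC [in RHS]setUC in E.
by have [/perm_inj -> /perm_inj ->] := set2_separated h2 h4 h2' h4' E.
Qed.

Lemma card_switching_pairs X (P : {set T * T}) :
  (forall st, st \in P -> switching_pair X st) ->
  #|P| <= #|admissible_pairs adj pi x|.
Proof.
move=> PX; have P_sw : {subset P <= switching_pair X} by move=> st /PX.
rewrite -(card_in_imset (sub_in2 P_sw (@switching_of_inj X))).
apply: subset_leq_card; apply/subsetP=> _ /imsetP [st /PX st_sw ->].
exact: switching_of_admissible st_sw.
Qed.

End Switchings.

Local Open Scope R_scope.

Lemma INR_leq m n : (m <= n)%N -> INR m <= INR n.
Proof. by move/leP; apply: le_INR. Qed.

Lemma leq_INR m n : INR m <= INR n -> (m <= n)%N.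
Proof. by move/INR_le/leP. Qed.

Lemma INR_addn m n : INR (m + n) = INR m + INR n.
Proof. by rewrite -plusE plus_INR. Qed.

Lemma INR_muln m n : INR (m * n) = INR m * INR n.
Proof. by rewrite -multE mult_INR. Qed.

Lemma INR_card_setD (T : finType) (A B : {set T}) :
  INR #|A| - INR #|B| <= INR #|A :\: B|.
Proof. by have := INR_leq (leq_card_setD A B); rewrite INR_addn; lra. Qed.

Lemma INR_card_setU (T : finType) (A B : {set T}) :
  INR #|A :|: B| <= INR #|A| + INR #|B|.
Proof. by rewrite -INR_addn; apply/INR_leq/(leq_card_setU A B).1. Qed.

Section Biclique.
Variables (T : finType) (adj : rel T) (A B : {set T}) (Z : {set {set T}}).
Variables (n : nat) (alpha eta nu : R) (pi : {perm T}) (x : T).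
Local Notation pinv := (pi^-1)%g.
Local Notation N := (INR n).

Hypotheses (eta_small : 0 < eta <= 1/100) (nu_le1 : nu <= 1)
  (alpha_small : 0 < alpha <= nu / 100) (N_large : 500 <= nu * N).
Hypothesis card_T : #|T| = n.
Hypotheses (adj_sym : forall u v, adj u v = adj v u) (adj_irr : forall u, ~~ adj u u).
Hypothesis B_compl : B = ~: A.
Hypothesis B1 : INR #|B| - INR #|A| <= alpha * N.
Hypothesis B2 : INR (card_low adj A B ((1/2 - eta) * N)) <= alpha * N.
Hypothesis B3 : forall a, a \in A -> nu * N <= INR (deg_in adj a B).
Hypothesis B5 : forall b, b \in B -> (1/4 - eta) * N <= INR (deg_in adj b A).
Hypothesis Z_edges :
  forall e, e \in Z -> exists u v, [/\ u \in B, v \in B, adj u v & e = [set u; v]].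
Hypothesis Z_small : INR #|Z| <= alpha * N.
Hypothesis A_indep : forall u v, u \in A -> v \in A -> ~~ adj u v.
Hypothesis B_edges : forall u v, u \in B -> v \in B -> adj u v -> [set u; v] \in Z.
Hypothesis pi_adj : forall y, adj y (pi y).
Hypothesis pi_cyclic : forall y z, fconnect pi y z.
Hypothesis xpix_notin_Z : [set x; pi x] \notin Z.

Lemma mem_B v : (v \in B) = (v \notin A).
Proof. by rewrite B_compl inE. Qed.

Lemma card_B_le : INR #|B| <= (N + alpha * N) / 2.
Proof.
have : (#|A| + #|B| = n)%N by rewrite B_compl cardsC.
by move/(f_equal INR); rewrite INR_addn; lra.
Qed.

Lemma adj_A_B a u : a \in A -> adj a u -> u \in B.
Proof. by move=> aA au; rewrite mem_B; apply: contraL au; apply: A_indep. Qed.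

Lemma adj_B_cover s u : s \in B -> u \in B -> adj s u -> s \in cover Z.
Proof. by move=> sB uB su; apply/bigcupP; exists [set s; u]; rewrite ?B_edges ?set21. Qed.

Lemma card_cover_Z : INR #|cover Z| <= 2 * alpha * N.
Proof.
have : (#|cover Z| <= #|Z| + #|Z|)%N.
  rewrite addnn -muln2; apply: leq_trans (leq_card_cover Z).1 _.
  rewrite -sum_nat_const; apply: leq_sum => e /Z_edges [u [v [_ _ _ ->]]].
  by rewrite cards2; case: (u != v).
by move/INR_leq; rewrite INR_addn; lra.
Qed.

Definition low := [set v in A | Rltb_ (INR (deg_in adj v B)) ((1/2 - eta) * N)].

Definition nbrs_B a := [set u in B | adj a u].

Lemma card_non_nbrs_B a : a \in A -> a \notin low ->
  INR #|B :\: nbrs_B a| <= (eta + alpha / 2) * N.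
Proof.
move=> aA a_high.
have deg_a : (1/2 - eta) * N <= INR (deg_in adj a B).
  by move: a_high; rewrite inE aA /Rltb_; case: Rlt_dec => //= /Rnot_lt_le.
have : (#|B :\: nbrs_B a| + #|nbrs_B a| = #|B|)%N.
  rewrite -(cardsID (nbrs_B a) B) addnC (setIidPr _) //.
  by apply/subsetP=> u; rewrite inE => /andP [].
have := card_B_le; rewrite /deg_in -/(nbrs_B a) in deg_a.
by move=> ? /(f_equal INR); rewrite INR_addn; lra.
Qed.

Lemma alpha_N_le : alpha * N <= nu * N / 100.
Proof. by have := pos_INR n; nra. Qed.

Lemma nu_N_le : nu * N <= N.
Proof. by have := pos_INR n; nra. Qed.

(* Cycle neighbours of a vertex of [good_nbrs c] lie in [A] and have high degree,
   since it is covered neither by [Z] nor by a cycle edge to [low]. *)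
Definition good_nbrs c :=
  [set s in B | adj c s] :\: (cover Z :|: pi @: low :|: pinv @: low :|: [set x]).

Lemma card_good_nbrs c : c \in A -> nu * N / 2 <= INR #|good_nbrs c|.
Proof.
move=> cA; rewrite /good_nbrs.
have low_small : INR #|low| <= alpha * N := B2.
have nbrs_c : nu * N <= INR #|[set s in B | adj c s]| by apply: B3.
have := INR_card_setD [set s in B | adj c s] (cover Z :|: pi @: low :|: pinv @: low :|: [set x]).
have := INR_card_setU (cover Z :|: pi @: low :|: pinv @: low) [set x].
have := INR_card_setU (cover Z :|: pi @: low) (pinv @: low).
have := INR_card_setU (cover Z) (pi @: low).
rewrite !card_perm_imset cards1 /=.
by have := card_cover_Z; have := alpha_N_le; lra.
Qed.

Lemma good_nbrsP c s : s \in good_nbrs c ->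
  [/\ adj c s, s != x, s \in B & [/\ pinv s \in A, pinv s \notin low, pi s \in A & pi s \notin low]].
Proof.
rewrite in_setD !in_setU in_set1 !mem_perm_imset invgK inE !negb_or -!andbA.
move=> /and5P [s_uncovered pinv_high pi_high sx /andP [sB cs]].
have cyc_A v : adj s v || adj v s -> v \in A.
  move=> sv; apply: contraR s_uncovered; rewrite -mem_B => vB.
  by apply: (adj_B_cover sB vB); case/orP: sv; rewrite // adj_sym.
split=> //; split=> //; apply: cyc_A; last by rewrite pi_adj.
by have := pi_adj (pinv s); rewrite permKV => ->; rewrite orbT.
Qed.

Definition partners d u :=
  [set w in A | [&& adj d w, w != x,
     w \notin [set pinv u; pinv (pinv (pinv u)); pi u; pi (pi (pi u))],
     adj (pinv u) (pi w) & adj (pinv w) (pi u)]].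

Lemma partnersP d u w : w \in partners d u ->
  [/\ adj d w, w != x, pi w \in B, pinv w \in B & cross_pair adj pi u w].
Proof.
rewrite inE => /andP [wA /and5P [dw wx w_far uw wu]].
split=> //; first exact: adj_A_B (pi_adj w).
  by apply: (adj_A_B wA); rewrite adj_sym -{2}(permKV pi w) pi_adj.
exact: cross_pairP.
Qed.

Lemma subset_partners d u :
  [set w in A | adj d w] :\: ([set x; pinv u; pinv (pinv (pinv u)); pi u; pi (pi (pi u))]
    :|: pi @: (B :\: nbrs_B (pi u)) :|: pinv @: (B :\: nbrs_B (pinv u)))
  \subset partners d u.
Proof.
apply/subsetP=> w; rewrite in_setD !in_setU !mem_perm_imset invgK !inE.
rewrite !negb_or -!andbA => /and5P [wx w1 w3 w1' /and5P [w3' pinv_w pi_w wA dw]].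
have pinv_wB : pinv w \in B.
  by apply: (adj_A_B wA); rewrite adj_sym -{2}(permKV pi w) pi_adj.
have pi_wB : pi w \in B by exact: adj_A_B (pi_adj w).
move: pinv_w pi_w; rewrite pinv_wB pi_wB /= !andbT !negbK => u_pinv_w u_pi_w.
by rewrite wA dw wx w1 w3 w1' w3' u_pi_w adj_sym u_pinv_w.
Qed.

Lemma card_partners c d u : d \in B -> u \in good_nbrs c -> (n <= 5 * #|partners d u|)%N.
Proof.
move=> dB /good_nbrsP [_ _ _ [pinv_uA pinv_u_high pi_uA pi_u_high]].
have := INR_leq (card_set5_le x (pinv u) (pinv (pinv (pinv u))) (pi u) (pi (pi (pi u)))).
have := INR_leq (subset_leq_card (subset_partners d u)).
have := card_non_nbrs_B pi_uA pi_u_high; have := card_non_nbrs_B pinv_uA pinv_u_high.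
set near_u := [set x; _; _; _; _].
set far_pi := B :\: nbrs_B (pi u); set far_pinv := B :\: nbrs_B (pinv u).
have := INR_card_setD [set w in A | adj d w] (near_u :|: pi @: far_pi :|: pinv @: far_pinv).
have := INR_card_setU (near_u :|: pi @: far_pi) (pinv @: far_pinv).
have := INR_card_setU near_u (pi @: far_pi).
have := B5 dB; rewrite /deg_in; have := alpha_N_le; have := nu_N_le.
have : eta * N <= N / 100 by have := pos_INR n; nra.
rewrite !card_perm_imset (INR_IZR_INZ 5) /= => *.
by apply/leq_INR; rewrite INR_muln (INR_IZR_INZ 5) /=; lra.
Qed.

Lemma card_admissible_ge_A : x \in A ->
  (#|good_nbrs x| * n <= 5 * #|admissible_pairs adj pi x|)%N.
Proof.
move=> xA; have pi_xB : pi x \in B := adj_A_B xA (pi_adj x).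
apply: leq_trans (card_dep_pairs_ge (fun s => card_partners (c := x) (u := s) pi_xB)) _.
rewrite leq_mul2l; apply/orP; right.
apply: (card_switching_pairs adj_sym pi_cyclic pi_adj (X := A)) => -[s t] /=.
rewrite inE /= => /andP [/good_nbrsP [xs sx _ [pinv_sA _ pi_sA _]]].
move=> /partnersP [pi_xt tx]; rewrite !mem_B => pi_tA' pinv_tA' cross.
by rewrite /switching_pair sx tx xs pi_xt pinv_sA pi_sA pi_tA' pinv_tA' cross.
Qed.

Lemma card_admissible_ge_B : x \in B ->
  (#|good_nbrs (pi x)| * n <= 5 * #|admissible_pairs adj pi x|)%N.
Proof.
move=> xB; apply: leq_trans (card_dep_pairs_swap_ge (fun t => card_partners (c := pi x) (u := t) xB)) _.
rewrite leq_mul2l; apply/orP; right.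
apply: (card_switching_pairs adj_sym pi_cyclic pi_adj (X := B)) => -[s t] /=.
rewrite inE /= => /andP [/good_nbrsP [pi_xt tx _ [pinv_tA _ pi_tA _]]].
move=> /partnersP [xs sx pi_sB pinv_sB cross].
rewrite /switching_pair sx tx xs pi_xt pi_sB pinv_sB !mem_B pinv_tA pi_tA.
by rewrite cross_pairC.
Qed.

Lemma card_admissible_pairs_ge : nu / 10 * N ^ 2 <= INR #|admissible_pairs adj pi x|.
Proof.
have [c cA counted] : exists2 c, c \in A &
    (#|good_nbrs c| * n <= 5 * #|admissible_pairs adj pi x|)%N.
  case xA: (x \in A); first by exists x; rewrite // card_admissible_ge_A.
  exists (pi x); last by apply: card_admissible_ge_B; rewrite mem_B xA.
  case pi_xA : (pi x \in A) => //.
  by move: xpix_notin_Z; rewrite B_edges ?pi_adj // !mem_B ?xA ?pi_xA.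
have := card_good_nbrs cA; have := pos_INR n.
move: counted => /INR_leq; rewrite !INR_muln (INR_IZR_INZ 5) /=.
nra.
Qed.

End Biclique.

Theorem mainTheorem14 :
  exists eta0 : R, (0 < eta0) /\
  forall eta : R, (0 < eta <= eta0) ->
  exists nu0 : R, (0 < nu0) /\
  forall nu : R, (0 < nu <= nu0) ->
  exists beta0 : R, (0 < beta0) /\
  forall beta : R, (0 < beta <= beta0) ->
  exists alpha0 : R, (0 < alpha0) /\
  forall alpha : R, (0 < alpha <= alpha0) ->
  exists n0 : nat, forall n : nat, (n0 <= n)%N ->
  forall (adj : rel 'I_n) (A B : {set 'I_n}) (Z : {set {set 'I_n}}),
    simple_graph adj ->
    superextremal adj A B alpha eta nu ->
    matching_in adj B Z ->
    (INR #|Z| <= alpha * INR n) ->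
    (forall u v, u \in A -> v \in A -> ~~ adj u v) ->
    (forall u v, u \in B -> v \in B -> adj u v -> [set u; v] \in Z) ->
    (forall a b, a \in A -> b \in B -> adj a b ->
       ((1/2 - eta) * INR n <= Rmax (INR (deg_in adj a B)) (INR (deg_in adj b A)))) ->
  forall pi : {perm 'I_n}, dir_ham_cycle adj pi ->
  forall x : 'I_n, [set x; pi x] \notin Z ->
    (beta * INR n ^ 2 <= INR #|admissible_pairs adj pi x|).
Proof.
exists (1/100); split; first lra.
move=> eta eta_bd; exists 1; split; first lra.
move=> nu nu_bd; exists (nu / 10); split; first lra.
move=> beta beta_bd; exists (nu / 100); split; first lra.
move=> alpha alpha_bd; have [n0 n0_large] := INR_unbounded (500 / nu).
exists n0 => n n0_le_n adj A B Z [adj_sym adj_irr] [[AB_disj AB_cover] [[_ B1] B2 B3 [_ B5 _]]]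
  [Z_edges _] Z_small A_indep B_edges _ pi [_ [pi_adj pi_cyclic]] x xpix_notin_Z.
rewrite card_ord in B1 B2 B3 B5.
have N_large : 500 <= nu * INR n.
  have := INR_leq n0_le_n; have : nu * (500 / nu) = 500 by field; lra.
  nra.
have := card_admissible_pairs_ge eta_bd (proj2 nu_bd) alpha_bd N_large (card_ord n) adj_sym adj_irr
  (setC_partition AB_disj AB_cover) B1 B2 B3 B5 Z_edges Z_small A_indep B_edges pi_adj pi_cyclic
  xpix_notin_Z.
have := pos_INR n; nra.
Qed.
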